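(* Let $X$ be a $T_1$ topological space which is Čech complete (in the sense defined in the context), and let $f:X\to X$ be a topological contraction. Then $f$ has a unique fixed point.
   Context: A topological space $X$ (not assumed Tychonoff) is called Čech complete if there exists a sequence $(\mathcal{U}_i)_{i\in\mathbb{N}}$ of open covers of $X$ such that whenever $(F_m)_m$ is a centered sequence of closed subsets of $X$ (every finite subfamily has nonempty intersection) with the property that for each $i$ there is $m_i$ such that $F_{m_i}$ is contained in some member of $\mathcal{U}_i$, the intersection $\bigcap_m F_m$ is nonempty. A mapping $f:X\to X$ is closed if it maps closed sets to closed sets (continuity is not assumed). A mapping $f:X\to X$ is a topological contraction if $f$ is closed and for every open cover $\mathcal{U}$ of $X$ there exist $n\in\mathbb{N}$ and $U\in\mathcal{U}$ with $f^n[X]\subseteq U$, where $f^n$ is the $n$-fold iterate of $f$. *)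

From HB Require Import structures.
From mathcomp Require Import all_boot all_order.
From mathcomp Require Import all_classical all_reals topology.
Set Implicit Arguments. Unset Strict Implicit. Unset Printing Implicit Defensive.
Local Open Scope classical_set_scope.

Definition open_cover (T : topologicalType) (C : set (set T)) : Prop :=
  (forall U, C U -> open U) /\ (forall x : T, exists2 U, C U & U x).

Definition centered (T : Type) (F : nat -> set T) : Prop :=
  forall S : set nat, finite_set S -> S !=set0 -> (\bigcap_(m in S) F m) !=set0.

(* Cech completeness as in the paper (no separation axiom assumed). *)
Definition cech_complete (T : topologicalType) : Prop :=
  exists U : nat -> set (set T),
    (forall i, open_cover (U i)) /\
    (forall F : nat -> set T,
       (forall m, closed (F m)) -> centered F ->
       (forall i, exists m, exists2 V, U i V & F m `<=` V) ->
       (\bigcap_m F m) !=set0).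

Definition closed_map (T : topologicalType) (f : T -> T) : Prop :=
  forall A : set T, closed A -> closed (f @` A).

Definition top_contraction (T : topologicalType) (f : T -> T) : Prop :=
  closed_map f /\
  forall C : set (set T), open_cover C ->
    exists n : nat, exists2 U, C U & range (iter n f) `<=` U.

From HB Require Import structures.
From mathcomp Require Import all_boot all_order.
From mathcomp Require Import all_classical all_reals topology.
Set Implicit Arguments. Unset Strict Implicit. Unset Printing Implicit Defensive.
Local Open Scope classical_set_scope.

(* The images f^n[X] form a nonincreasing sequence of nonempty sets, closed
   because f is a closed map; by the contraction property each open cover of
   the Cech-completeness sequence has a member containing one of them, so
   their intersection K is nonempty. If a <> b were both in K, the open cover
   {X \ {a}, X \ {b}} (open by T1) would have a member containing some f^n[X],
   hence missing a or b: so K is a single point. Every fixed point lies in K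
   and f maps K into K, so this point is the unique fixed point. *)

Section EventualRange.
Variables (T : Type) (f : T -> T).

Definition eventual_range : set T := \bigcap_n range (iter n f).

Lemma range_iterS n : range (iter n.+1 f) = f @` range (iter n f).
Proof.
apply/seteqP; split=> x.
  by move=> [y _ <-]; exists (iter n f y) => //; exists y.
by move=> [_ [y _ <-] <-]; exists y.
Qed.

Lemma range_iter_subset m n : (m <= n)%N ->
  range (iter n f) `<=` range (iter m f).
Proof.
by move=> /subnK <- _ [x _ <-]; exists (iter (n - m) f x); rewrite // addnC iterD.
Qed.

Lemma fixed_point_eventual_range x : f x = x -> eventual_range x.
Proof. by move=> fx n _; exists x => //; elim: n => //= n ->. Qed.

Lemma eventual_range_image x : eventual_range x -> eventual_range (f x).
Proof. by move=> Kx n _; have [y _ <-] := Kx n I; exists (f y); rewrite // -iterSr. Qed.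

End EventualRange.

Lemma nonincreasing_centered (T : Type) (F : nat -> set T) :
  (forall m n, (m <= n)%N -> F n `<=` F m) -> (forall n, F n !=set0) ->
  centered F.
Proof.
move=> Fnincr Fn0 S /finite_seqP[s ->] _.
have [x Fx] := Fn0 (\max_(m <- s) m)%N.
by exists x => m ms; apply: Fnincr Fx; exact: leq_bigmax_seq.
Qed.

Section TopologicalContraction.
Variables (T : topologicalType) (f : T -> T).
Hypothesis fcontr : top_contraction f.

Lemma closed_range_iter n : closed (range (iter n f)).
Proof.
elim: n => [|n IH]; first by rewrite /= image_id; exact: closedT.
by rewrite range_iterS; exact: fcontr.1 _ IH.
Qed.

Lemma top_contraction_nonempty : [set: T] !=set0.
Proof.
apply: contrapT => T0.
have /fcontr.2[n [V []]] : open_cover (@set0 (set T)).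
by split=> // x; case: T0; exists x.
Qed.

Lemma cech_complete_eventual_range : cech_complete T -> eventual_range f !=set0.
Proof.
move=> [U [Ucover Ucech]]; apply: Ucech.
- exact: closed_range_iter.
- apply: nonincreasing_centered; first exact: range_iter_subset.
  have [x _] := top_contraction_nonempty.
  by move=> n; exists (iter n f x); exists x.
- by move=> i; have [n [V UV fnV]] := fcontr.2 _ (Ucover i); exists n, V.
Qed.

Lemma accessible_eventual_range_subset1 :
  accessible_space T -> is_subset1 (eventual_range f).
Proof.
move=> T1 a b Ka Kb; apply: contrapT => ab.
have cover : open_cover [set ~` [set a]; ~` [set b]].
  split=> [_ [->|->]|x]; try by rewrite openC; exact: accessible_closed_set1.
  have [->|xa] := eqVneq x a.
    by exists (~` [set b]); [right | exact: ab].
  by exists (~` [set a]); [left | exact/eqP].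
have [n [V [->|->] fnV]] := fcontr.2 _ cover.
- exact: fnV _ (Ka n I) erefl.
- exact: fnV _ (Kb n I) erefl.
Qed.

End TopologicalContraction.

Theorem theorem1 (T : topologicalType) (f : T -> T) :
  accessible_space T -> cech_complete T -> top_contraction f ->
  exists x : T, f x = x /\ (forall y : T, f y = y -> y = x).
Proof.
move=> T1 cech fcontr.
have [a Ka] := cech_complete_eventual_range fcontr cech.
have K1 := accessible_eventual_range_subset1 fcontr T1.
exists a; split; first exact: K1 (eventual_range_image Ka) Ka.
by move=> y fy; exact: K1 (fixed_point_eventual_range fy) Ka.
Qed.
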